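(* Let $\mathcal{H}$ be a real Hilbert space, $A_1:\mathcal{H}\to\mathcal{H}$ monotone and $L$-Lipschitz, and $A_2:\mathcal{H}\rightrightarrows\mathcal{H}$ maximally $\mu$-strongly monotone. Let $\Gamma\subseteq\mathbb{R}_{++}$ be a nonempty closed interval and $T_\gamma:=\mathrm{Id}-J_{\gamma A_1}+J_{\gamma A_2}(2J_{\gamma A_1}-\mathrm{Id})$ for $\gamma\in\Gamma$. Then there exists $\beta\in[0,1)$ such that every $T_\gamma$, $\gamma\in\Gamma$, is a $\beta$-contraction.
   Context: $J_A=(\mathrm{Id}+A)^{-1}$. $A_2$ is $\mu$-strongly monotone if $\langle x-y,u-v\rangle\ge\mu\|x-y\|^2$ for all $(x,u),(y,v)\in\operatorname{gra}A_2$. A $\beta$-contraction satisfies $\|Tx-Ty\|\le\beta\|x-y\|$ for all $x,y$. *)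

From HB Require Import structures.
From mathcomp Require Import all_boot all_order all_algebra.
From mathcomp Require Import all_classical all_reals all_analysis.
Set Implicit Arguments. Unset Strict Implicit. Unset Printing Implicit Defensive.
Import Order.TTheory GRing.Theory Num.Theory.
Import numFieldNormedType.Exports.
Local Open Scope classical_set_scope.
Local Open Scope ring_scope.

HB.mixin Record NormedModule_isInnerProduct (R : realType) V
    of NormedModule R V := {
  inner : V -> V -> R;
  innerC : forall x y, inner x y = inner y x;
  innerDl : forall x y z, inner (x + y) z = inner x z + inner y z;
  innerZl : forall (a : R) x y, inner (a *: x) y = a * inner x y;
  inner_normE : forall x, inner x x = `|x| ^+ 2
}.

#[short(type="hilbertType")]
HB.structure Definition Hilbert (R : realType) :=
  { V of CompleteNormedModule R V & NormedModule_isInnerProduct R V }.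

Section Operators.
Context {R : realType} {H : hilbertType R}.

Definition setop := H -> set H.

Definition sop (A : H -> H) : setop := fun x => [set A x].

Definition monotone_op (A : setop) : Prop :=
  forall x y u v, A x u -> A y v -> 0 <= inner (x - y) (u - v).

Definition strongly_monotone_op (mu : R) (A : setop) : Prop :=
  forall x y u v, A x u -> A y v -> mu * `|x - y| ^+ 2 <= inner (x - y) (u - v).

Definition maximally_monotone_op (A : setop) : Prop :=
  monotone_op A /\
  forall B : setop, monotone_op B -> (forall x u, A x u -> B x u) ->
    forall x u, B x u -> A x u.

Definition maximally_strongly_monotone_op (mu : R) (A : setop) : Prop :=
  0 < mu /\ strongly_monotone_op mu A /\ maximally_monotone_op A.

Definition lipschitz_map (L : R) (A : H -> H) : Prop :=
  forall x y, `|A x - A y| <= L * `|x - y|.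

(* resolvent J_{gamma A} = (Id + gamma A)^{-1}: the (chosen) point y with
   x \in y + gamma A y *)
Definition resolvent (gamma : R) (A : setop) (x : H) : H :=
  get [set y | exists2 u, A y u & x = y + gamma *: u].

Definition DR_op (gamma : R) (A1 : H -> H) (A2 : setop) (x : H) : H :=
  x - resolvent gamma (sop A1) x
    + resolvent gamma A2 (2%:R *: resolvent gamma (sop A1) x - x).

Definition beta_contraction (beta : R) (T : H -> H) : Prop :=
  forall x y, `|T x - T y| <= beta * `|x - y|.

End Operators.

From HB Require Import structures.
From mathcomp Require Import all_boot all_order all_algebra.
From mathcomp Require Import all_classical all_reals all_analysis.
From mathcomp Require Import ring lra.
Import Order.TTheory GRing.Theory Num.Theory.
Import numFieldNormedType.Exports.
Local Open Scope classical_set_scope.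
Local Open Scope ring_scope.

(* Minty's theorem comes from minimizing, over pairs (x, u), the Fitzpatrick
   function F of a maximally monotone B plus (|x|^2 + |u|^2) / 2.  Maximality
   gives F(x, u) >= <x, u>, so the sum is at least |x + u|^2 / 2 >= 0; it is
   strongly convex, so minimizing sequences are Cauchy; and the first-order
   condition at a minimizer (x, u) forces x + u = 0 and B (-u) (-x).  Hence all
   resolvents are everywhere defined.

   Write x = p + gamma A1 p and T_gamma x = p - gamma w, where
   w is in A2 (p - gamma A1 p - gamma w).  For two points, the differences
   P = p - p', U = gamma (A1 p - A1 p') and V = gamma (w - w') satisfy
     |P + U|^2 = |P - V|^2 + |U + V|^2 + 2 <P, U> + 2 <P - U - V, V>,
   monotonicity of A1 and strong monotonicity of A2 make the last three terms
   at least c |P|^2 / 2 with c = min(1, 2 a mu), and |P + U| <= (1 + b |L|) |P|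
   by the Lipschitz bound; this gives a contraction factor uniform in gamma. *)

Lemma ge0_of_small_perturbation {R : realFieldType} {a b : R} :
  (forall t, 0 < t <= 1 -> 0 <= a + t * b) -> 0 <= a.
Proof.
move=> small; rewrite leNgt; apply/negP => a_lt0.
have b_gt0 : 0 < b by have := small 1; rewrite ltr01 lexx mul1r; lra.
have t0 : 0 < - a / (b - a) by rewrite divr_gt0; lra.
have t1 : - a / (b - a) <= 1 by rewrite ler_pdivrMr; lra.
have := small (- a / (b - a)); rewrite t0 t1 => /(_ isT).
have -> : a + - a / (b - a) * b = - (a ^+ 2 / (b - a)) by field; lra.
suff : 0 < a ^+ 2 / (b - a) by lra.
by apply: divr_gt0; nra.
Qed.

Lemma sqr_le_contraction {R : realFieldType} (x y e : R) :
  0 <= e <= 1 -> 0 <= y -> x ^+ 2 <= (1 - e) * y ^+ 2 -> x <= (1 - e / 2) * y.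
Proof.
move=> /andP[e0 e1] y0 xy; rewrite leNgt; apply/negP => lt_x.
have : 0 <= (1 - e / 2) * y by rewrite mulr_ge0 //; lra.
nra.
Qed.

Section CauchySqr.
Context {R : realType} {V : completeNormedModType R}.

Lemma cvg_sqr_distB_le (z : nat -> V) {r : nat -> R} : r @ \oo --> 0 ->
  (forall n k, (n <= k)%N -> `|z n - z k| ^+ 2 <= r n) -> cvg (z @ \oo).
Proof.
move=> r0 zr; apply: cauchy_cvg; apply: cauchy_exP => e e0.
have [N _ rN] := cvgr0_norm_lt _ r0 _ (exprn_gt0 2 e0).
exists (z N); exists N => // n /= Nn; rewrite -ball_normE /=.
have zN := zr N n Nn; have rN' := rN N (leqnn N).
rewrite -ltr_sqr ?nnegrE ?(ltW e0) //.
exact: le_lt_trans zN (le_lt_trans (ler_norm _) rN').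
Qed.

End CauchySqr.

Section InnerProduct.
Context {R : realType} {H : hilbertType R}.
Implicit Types (x y z : H) (a : R).

Lemma innerDr x y z : inner x (y + z) = inner x y + inner x z.
Proof. by rewrite innerC innerDl !(innerC _ x). Qed.

Lemma innerZr a x y : inner x (a *: y) = a * inner x y.
Proof. by rewrite innerC innerZl innerC. Qed.

Lemma inner0l y : inner 0 y = 0 :> R.
Proof. by rewrite -(scale0r 0) innerZl mul0r. Qed.

Lemma innerNl x y : inner (- x) y = - inner x y.
Proof. by rewrite -scaleN1r innerZl mulN1r. Qed.

Lemma innerNr x y : inner x (- y) = - inner x y.
Proof. by rewrite innerC innerNl innerC. Qed.

Definition innerE :=
  (@innerDl R H, innerDr, innerNl, innerNr, @innerZl R H, innerZr).

Lemma inner_self_ge0 x : 0 <= inner x x.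
Proof. by rewrite inner_normE exprn_ge0. Qed.

Lemma inner_self_eq0 x : (inner x x == 0) = (x == 0).
Proof. by rewrite inner_normE sqrf_eq0 normr_eq0. Qed.

Lemma inner_le_sqr x y : 2 * inner x y <= inner x x + inner y y.
Proof. by have := inner_self_ge0 (x - y); rewrite !innerE (innerC y x); lra. Qed.

Lemma inner_polar x y : inner x y = (`|x + y| ^+ 2 - `|x - y| ^+ 2) / 4.
Proof. by rewrite -!inner_normE !innerE (innerC y x); lra. Qed.

Lemma cvg_inner {T : Type} (F : set_system T) {FF : Filter F} (f g : T -> H) x y :
  f @ F --> x -> g @ F --> y -> inner (f t) (g t) @[t --> F] --> inner x y.
Proof.
move=> fx gy; rewrite inner_polar !expr2.
under eq_fun do rewrite inner_polar !expr2.
apply: cvgM; last exact: cvg_cst.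
have nD : `|f t + g t| @[t --> F] --> `|x + y| by apply: cvg_norm; apply: cvgD.
have nB : `|f t - g t| @[t --> F] --> `|x - y| by apply: cvg_norm; apply: cvgB.
by apply: cvgB; apply: cvgM.
Qed.

End InnerProduct.

Section Minty.
Context {R : realType} {H : hilbertType R}.
Implicit Types (x u y v : H) (s t : R).

Definition fitz_reg y v x u : R :=
  inner x v + inner y u - inner y v + (inner x x + inner u u) / 2.

Lemma fitz_reg_comb y v x u x' u' t :
  fitz_reg y v ((1 - t) *: x + t *: x') ((1 - t) *: u + t *: u') =
  (1 - t) * fitz_reg y v x u + t * fitz_reg y v x' u'
  - t * (1 - t) / 2 * (inner (x - x') (x - x') + inner (u - u') (u - u')).
Proof. by rewrite /fitz_reg !innerE (innerC x' x) (innerC u' u); ring. Qed.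

Variable B : H -> set H.
Hypothesis mmB : maximally_monotone_op B.

Lemma maximally_monotone_related x u :
  (forall y v, B y v -> 0 <= inner (x - y) (u - v)) -> B x u.
Proof.
move=> xu_rel; have [mB maxB] := mmB.
apply: (maxB (fun y v => B y v \/ y = x /\ v = u)); [|by left|by right].
move=> y1 y2 v1 v2 [B1|[-> ->]] [B2|[-> ->]].
- exact: mB.
- by rewrite -opprB -(opprB u) innerNl innerNr opprK; apply: xu_rel.
- exact: xu_rel.
- by rewrite !subrr inner0l.
Qed.

Lemma maximally_monotone_graph_nonempty : exists y v, B y v.
Proof.
have [//|no_graph] := pselect (exists y v, B y v).
exists 0, 0; apply: maximally_monotone_related => y v Byv.
by case: no_graph; exists y, v.
Qed.

(* [fitz_reg_le B x u t] says Phi(x, u) <= t, where Phi(x, u), the supremum of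
   [fitz_reg y v x u] over the graph of B, is the Fitzpatrick function of B
   at (x, u) plus (|x|^2 + |u|^2) / 2. *)
Definition fitz_reg_le x u t := forall y v, B y v -> fitz_reg y v x u <= t.

Lemma fitz_reg_le_inner {x u t} :
  fitz_reg_le x u t -> inner x u + (inner x x + inner u u) / 2 <= t.
Proof.
move=> le_t; rewrite leNgt; apply/negP => gt_t.
have Bxu : B x u.
  apply: maximally_monotone_related => y v Byv.
  by have := le_t y v Byv; rewrite /fitz_reg !innerE; lra.
by have := le_t x u Bxu; rewrite /fitz_reg; lra.
Qed.

Lemma fitz_reg_le_ge0 x u t : fitz_reg_le x u t -> 0 <= t.
Proof.
move=> /fitz_reg_le_inner; have := inner_self_ge0 (x + u).
by rewrite !innerE (innerC u x); lra.
Qed.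

Lemma fitz_reg_le_graph {y v} :
  B y v -> fitz_reg_le y v (inner y v + (inner y y + inner v v) / 2).
Proof.
move=> Byv y' v' By'v'; have := mmB.1 _ _ _ _ Byv By'v'.
by rewrite /fitz_reg !innerE; lra.
Qed.

Lemma fitz_reg_le_comb {x u s x' u' s'} t : 0 <= t <= 1 ->
  fitz_reg_le x u s -> fitz_reg_le x' u' s' ->
  fitz_reg_le ((1 - t) *: x + t *: x') ((1 - t) *: u + t *: u')
    ((1 - t) * s + t * s'
     - t * (1 - t) / 2 * (inner (x - x') (x - x') + inner (u - u') (u - u'))).
Proof.
move=> /andP[t0 t1] le_s le_s' y v Byv; rewrite fitz_reg_comb.
by have := le_s y v Byv; have := le_s' y v Byv; nra.
Qed.

Definition fitz_inf := inf [set t | exists x u, fitz_reg_le x u t].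

Lemma fitz_inf_has_inf : has_inf [set t | exists x u, fitz_reg_le x u t].
Proof.
have [y [v Byv]] := maximally_monotone_graph_nonempty.
split; first by exists (inner y v + (inner y y + inner v v) / 2), y, v;
  exact: fitz_reg_le_graph.
by exists 0 => t [x [u /fitz_reg_le_ge0]].
Qed.

Lemma fitz_inf_le {x u t} : fitz_reg_le x u t -> fitz_inf <= t.
Proof. by move=> le_t; apply: ge_inf; [case: fitz_inf_has_inf | exists x, u]. Qed.

Lemma fitz_inf_approx e : 0 < e -> exists x u, fitz_reg_le x u (fitz_inf + e).
Proof.
move=> e0; have [s [x [u le_s]] lt_s] := inf_adherent e0 fitz_inf_has_inf.
by exists x, u => y v Byv; apply: le_trans (le_s y v Byv) (ltW lt_s).
Qed.

Lemma fitz_inf_near_min_dist {x u s x' u' s'} :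
  fitz_reg_le x u (fitz_inf + s) -> fitz_reg_le x' u' (fitz_inf + s') ->
  inner (x - x') (x - x') + inner (u - u') (u - u') <= 4 * (s + s').
Proof.
move=> le_s le_s'; have half01 : 0 <= (1 / 2 : R) <= 1 by lra.
have /fitz_inf_le := fitz_reg_le_comb (1 / 2) half01 le_s le_s'; lra.
Qed.

Lemma fitz_inf_attained : exists x u, fitz_reg_le x u fitz_inf.
Proof.
have [f approx] : {f : nat -> H * H &
    forall n, fitz_reg_le (f n).1 (f n).2 (fitz_inf + harmonic n)}.
  apply: (@choice _ _ (fun n p => fitz_reg_le p.1 p.2 (fitz_inf + harmonic n)))
    => n.
  by have [x [u le_h]] := fitz_inf_approx _ (harmonic_gt0 n); exists (x, u).
pose xs n := (f n).1; pose us n := (f n).2.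
have dist_le n k : (n <= k)%N ->
    inner (xs n - xs k) (xs n - xs k) + inner (us n - us k) (us n - us k)
    <= 8 * harmonic n.
  move=> le_nk; have le_hkn : harmonic k <= harmonic n :> R.
    by rewrite lef_pV2 ?posrE // ler_nat ltnS.
  have := fitz_inf_near_min_dist (approx n) (approx k).
  by move: le_hkn; set hn := harmonic n; set hk := harmonic k; lra.
have h8 : 8 * harmonic n @[n --> \oo] --> (0 : R).
  by rewrite -(mulr0 8); apply: cvgM; [exact: cvg_cst | exact: cvg_harmonic].
have [cvg_xs cvg_us] : cvg (xs @ \oo) /\ cvg (us @ \oo).
  split; [apply: (cvg_sqr_distB_le xs h8) | apply: (cvg_sqr_distB_le us h8)];
    move=> n k /dist_le; rewrite -!inner_normE.
    by have := inner_self_ge0 (us n - us k); lra.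
  by have := inner_self_ge0 (xs n - xs k); lra.
exists (lim (xs @ \oo)), (lim (us @ \oo)) => y v Byv.
have lim_fitz : fitz_reg y v (xs n) (us n) @[n --> \oo] -->
    fitz_reg y v (lim (xs @ \oo)) (lim (us @ \oo)).
  apply: cvgD.
    apply: cvgB; last exact: cvg_cst.
    by apply: cvgD; apply: cvg_inner => //; exact: cvg_cst.
  by apply: cvgM; [apply: cvgD; exact: cvg_inner | exact: cvg_cst].
have lim_level : fitz_inf + harmonic n @[n --> \oo] --> fitz_inf.
  rewrite -[X in _ --> X]addr0.
  by apply: cvgD; [exact: cvg_cst | exact: cvg_harmonic].
by apply: (ler_cvg_to lim_fitz lim_level); apply: nearW => n; exact: approx.
Qed.

Lemma fitz_inf_minimizer_ineq x u : fitz_reg_le x u fitz_inf ->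
  forall y v, B y v -> inner (x + u) (x + u) <= inner (y + u) (v + x).
Proof.
move=> min_xu y v Byv.
set T := inner y v + (inner y y + inner v v) / 2.
set D := inner (x - y) (x - y) + inner (u - v) (u - v).
(* Phi is at least fitz_inf on the segment from (x, u) towards (y, v);
   letting the step t tend to 0 gives the first-order condition. *)
have step t : 0 < t <= 1 -> 0 <= (T - fitz_inf - D / 2) + t * (D / 2).
  move=> /andP[t0 t1]; have t01 : 0 <= t <= 1 by rewrite ltW.
  have /fitz_inf_le := fitz_reg_le_comb t t01 min_xu (fitz_reg_le_graph Byv).
  rewrite -/T -/D => le_comb.
  suff : 0 <= t * (T - fitz_inf - D / 2 + t * (D / 2)) by rewrite pmulr_rge0.
  have -> : t * (T - fitz_inf - D / 2 + t * (D / 2)) =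
    (1 - t) * fitz_inf + t * T - t * (1 - t) / 2 * D - fitz_inf by ring.
  by rewrite subr_ge0.
have := ge0_of_small_perturbation step; have := fitz_reg_le_inner min_xu.
rewrite /T /D !innerE (innerC y x) (innerC v u) (innerC u x); lra.
Qed.

Lemma fitz_inf_minimizer x u :
  fitz_reg_le x u fitz_inf -> x + u = 0 /\ B (- u) (- x).
Proof.
move=> /fitz_inf_minimizer_ineq min_xu.
have Bux : B (- u) (- x).
  apply: maximally_monotone_related => y v Byv.
  rewrite -!opprD innerNl innerNr opprK (addrC u) (addrC x).
  exact: le_trans (inner_self_ge0 _) (min_xu y v Byv).
split=> //; apply/eqP; rewrite -inner_self_eq0 eq_le inner_self_ge0 andbT.
by have := min_xu _ _ Bux; rewrite !addNr inner0l.
Qed.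

Lemma maximally_monotone_zero_in_range : exists y, B y (- y).
Proof.
have [x [u /fitz_inf_minimizer [xu0 Bux]]] := fitz_inf_attained.
move/eqP: xu0; rewrite addr_eq0 => /eqP xE.
by rewrite xE in Bux; exists (- u).
Qed.

End Minty.

Section Resolvent.
Context {R : realType} {H : hilbertType R}.

Lemma maximally_monotone_affine (A : H -> set H) (c : R) (w : H) : 0 < c ->
  maximally_monotone_op A -> maximally_monotone_op (fun y v => A y (c *: v + w)).
Proof.
have affine_ge0 k (z u v w' : H) : 0 < k ->
    (0 <= inner z ((k *: u + w') - (k *: v + w'))) = (0 <= inner z (u - v)).
  by move=> k0; rewrite opprD addrACA subrr addr0 -scalerBr innerZr pmulr_rge0.
move=> c0 [mA maxA]; split=> [x y u v Axu Ayv | D mD AD x u Dxu].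
  by have := mA _ _ _ _ Axu Ayv; rewrite affine_ge0.
pose D' y v := D y (c^-1 *: v + - (c^-1 *: w)).
have cK v : c^-1 *: (c *: v + w) + - (c^-1 *: w) = v.
  by rewrite scalerDr scalerA mulVf ?gt_eqF // scale1r addrK.
rewrite -(cK u) in Dxu; apply: (maxA D') Dxu.
- move=> x1 y1 u1 v1 D1 D2.
  by have := mD _ _ _ _ D1 D2; rewrite affine_ge0 ?invr_gt0.
- move=> y v Ayv; apply: AD.
  by rewrite /D' scalerDr scalerN !scalerA divff ?gt_eqF // !scale1r subrK.
Qed.

Theorem minty (B : H -> set H) :
  maximally_monotone_op B -> forall w, exists y, B y (w - y).
Proof.
move=> mmB w.
have mmBw := maximally_monotone_affine B 1 w ltr01 mmB.
have [y] := maximally_monotone_zero_in_range _ mmBw.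
by rewrite scale1r addrC; exists y.
Qed.

Lemma resolventP {A : H -> set H} {gamma : R} (x : H) :
  0 < gamma -> maximally_monotone_op A ->
  exists2 u, A (resolvent gamma A x) u & x = resolvent gamma A x + gamma *: u.
Proof.
move=> g0 mmA.
have gV0 : 0 < gamma^-1 by rewrite invr_gt0.
have [y Ay] := minty _ (maximally_monotone_affine A gamma^-1 0 gV0 mmA) x.
have : exists y, exists2 u, A y u & x = y + gamma *: u.
  exists y, (gamma^-1 *: (x - y)); first by rewrite addr0 in Ay.
  by rewrite scalerA divff ?gt_eqF // scale1r addrC subrK.
by move/getPex.
Qed.

Lemma lipschitz_monotone_maximal {A : H -> H} {L : R} :
  monotone_op (sop A) -> lipschitz_map L A -> maximally_monotone_op (sop A).
Proof.
move=> mA lipA; split=> // D mD AD x u Dxu.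
set d := u - A x; set t := (2 * (`|L| + 1))^-1.
have t0 : 0 < t by rewrite invr_gt0; have := normr_ge0 L; lra.
have tL : t * `|L| <= 1 / 2.
  by rewrite ler_pdivrMl ?mulr_gt0 //; have := normr_ge0 L; nra.
set y := x + t *: d; set z := A x - A y.
have dz : inner d d + inner d z <= 0.
  have := mD _ _ _ _ Dxu (AD y (A y) erefl).
  have -> : x - y = - (t *: d) by rewrite opprD addNKr.
  have -> : u - A y = d + z by rewrite addrA subrK.
  by rewrite innerNl innerZl -innerDr oppr_ge0 pmulr_rle0.
have zz : inner z z <= inner d d / 4.
  rewrite !inner_normE; have := lipA x y.
  have -> : x - y = - (t *: d) by rewrite opprD addNKr.
  rewrite normrN normrZ gtr0_norm // => z_le.
  have {}z_le : `|z| <= `|d| / 2.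
    have Lt : L * t <= 1 / 2 by have := ler_norm L; nra.
    by apply: le_trans z_le _; rewrite mulrA; have := normr_ge0 d; nra.
  by have := normr_ge0 z; nra.
suff : inner d d == 0 by rewrite inner_self_eq0 subr_eq0 => /eqP.
clearbody d z; have := inner_le_sqr (- d) z; rewrite !innerE opprK => dz2.
by rewrite eq_le inner_self_ge0 andbT; lra.
Qed.

End Resolvent.

Section DouglasRachford.
Context {R : realType} {H : hilbertType R}.

Lemma DR_opE {A1 : H -> H} {A2 : H -> set H} {gamma : R} (x : H) :
  0 < gamma -> maximally_monotone_op (sop A1) -> maximally_monotone_op A2 ->
  exists p w, [/\ A2 (p - gamma *: A1 p - gamma *: w) w,
    x = p + gamma *: A1 p & DR_op gamma A1 A2 x = p - gamma *: w].
Proof.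
move=> g0 mmA1 mmA2; rewrite /DR_op.
have [_ -> xE] := resolventP x g0 mmA1.
set p := resolvent gamma (sop A1) x in xE *.
have [w Aw wE] := resolventP (2%:R *: p - x) g0 mmA2.
set q := resolvent gamma A2 _ in Aw wE *.
have qE : q = p - gamma *: A1 p - gamma *: w.
  by rewrite -[q](addrK (gamma *: w)) -wE xE scaler_nat mulr2n opprD addrA addrK.
exists p, w; split; rewrite -?qE //.
by rewrite qE xE (addrC p) addrK addrA [_ *: _ + _]addrC subrK.
Qed.

Lemma sqr_norm_DR_le (P U V : H) (c k : R) : 0 <= c <= 1 -> 0 < k ->
  0 <= inner P U -> c * `|P - U - V| ^+ 2 <= 2 * inner (P - U - V) V ->
  `|P + U| <= k * `|P| ->
  `|P - V| ^+ 2 <= (1 - c / (2 * k ^+ 2)) * `|P + U| ^+ 2.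
Proof.
move=> /andP[c0 c1] k0 PU QV PUk.
have PUk2 : `|P + U| ^+ 2 <= k ^+ 2 * `|P| ^+ 2.
  by rewrite -exprMn; apply: lerXn2r; rewrite // nnegrE ?mulr_ge0 // ltW.
rewrite -!inner_normE in QV PUk2 *.
set Q := P - U - V in QV.
have PV : P - V = U + Q by rewrite /Q addrAC addrCA subrr addr0.
have PE : P = Q + (U + V) by rewrite /Q addrACA subrK addNr addr0.
have split_PU : inner (P + U) (P + U) =
    inner (P - V) (P - V) + inner (U + V) (U + V) + 2 * inner P U + 2 * inner Q V.
  rewrite PV; clearbody Q; rewrite PE !innerE.
  by rewrite (innerC U Q) (innerC V Q) (innerC V U); lra.
have PQ : inner P P <= 2 * inner Q Q + 2 * inner (U + V) (U + V).
  rewrite {1 2}PE; clearbody Q; have := inner_le_sqr Q (U + V).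
  by move: (U + V) => W; rewrite !innerE (innerC W Q); lra.
have ck : c / (2 * k ^+ 2) * inner (P + U) (P + U) <= c / 2 * inner P P.
  have -> : c / 2 * inner P P = c / (2 * k ^+ 2) * (k ^+ 2 * inner P P).
    by field; rewrite gt_eqF ?exprn_gt0.
  by rewrite ler_wpM2l // divr_ge0 // mulr_ge0 // exprn_ge0 // ltW.
have := inner_self_ge0 Q; have := inner_self_ge0 (U + V); nra.
Qed.

Lemma DR_op_sqr_contraction (A1 : H -> H) (A2 : H -> set H) (L mu gamma c k : R) :
  monotone_op (sop A1) -> lipschitz_map L A1 ->
  strongly_monotone_op mu A2 -> maximally_monotone_op A2 ->
  0 < gamma -> 0 <= c <= 1 -> c <= 2 * gamma * mu -> 1 + gamma * `|L| <= k ->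
  forall x x', `|DR_op gamma A1 A2 x - DR_op gamma A1 A2 x'| ^+ 2
    <= (1 - c / (2 * k ^+ 2)) * `|x - x'| ^+ 2.
Proof.
move=> mA1 lipA1 smA2 mmA2 g0 c01 c_le k_ge x x'.
have mmA1 := lipschitz_monotone_maximal mA1 lipA1.
have [p [w [Aw -> ->]]] := DR_opE x g0 mmA1 mmA2.
have [p' [w' [Aw' -> ->]]] := DR_opE x' g0 mmA1 mmA2.
set P := p - p'; set U := gamma *: (A1 p - A1 p'); set V := gamma *: (w - w').
have -> : p + gamma *: A1 p - (p' + gamma *: A1 p') = P + U.
  by rewrite opprD addrACA -scalerBr.
have -> : p - gamma *: w - (p' - gamma *: w') = P - V.
  by rewrite opprD addrACA -opprD -scalerBr.
have QE : P - U - V =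
    (p - gamma *: A1 p - gamma *: w) - (p' - gamma *: A1 p' - gamma *: w').
  by rewrite /P /U /V !scalerBr !opprD !opprK [RHS]addrACA [p - p' + _]addrACA.
apply: sqr_norm_DR_le => //.
- by apply: lt_le_trans k_ge; rewrite ltr_pwDl ?mulr_ge0 ?(ltW g0).
- by rewrite innerZr mulr_ge0 ?(ltW g0) // (mA1 _ _ _ _ erefl erefl).
- rewrite QE /V innerZr; have := smA2 _ _ _ _ Aw Aw'.
  set Q := _ - _; have := exprn_ge0 2 (normr_ge0 Q); nra.
- apply: le_trans (ler_normD _ _) _.
  have UP : `|U| <= gamma * `|L| * `|P|.
    rewrite /U normrZ gtr0_norm // -mulrA ler_wpM2l ?(ltW g0) //.
    by apply: le_trans (lipA1 p p') _; rewrite ler_wpM2r // ler_norm.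
  by have := ler_wpM2r (normr_ge0 P) k_ge; lra.
Qed.

End DouglasRachford.

Theorem lemma4p4 (R : realType) (H : hilbertType R) (A1 : H -> H) (L : R)
  (A2 : H -> set H) (mu : R) (a b : R) :
  monotone_op (sop A1) -> lipschitz_map L A1 ->
  maximally_strongly_monotone_op mu A2 ->
  0 < a -> a <= b ->
  exists beta : R, 0 <= beta < 1 /\
    forall gamma : R, a <= gamma <= b -> beta_contraction beta (DR_op gamma A1 A2).
Proof.
move=> mA1 lipA1 [mu0 [smA2 mmA2]] a0 ab.
set c := Num.min 1 (2 * a * mu); set k := 1 + b * `|L|.
have c_gt0 : 0 < c by rewrite lt_min ltr01 !mulr_gt0.
have c_le1 : c <= 1 by rewrite ge_min lexx.
have k2_ge1 : 1 <= k ^+ 2.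
  by rewrite exprn_ege1 // lerDl mulr_ge0 // ltW // (lt_le_trans a0).
have k2_gt0 : 0 < 2 * k ^+ 2 by lra.
set e := c / (2 * k ^+ 2).
have e_gt0 : 0 < e by rewrite divr_gt0.
have e_le1 : e <= 1 by rewrite ler_pdivrMr //; lra.
exists (1 - e / 2); split; first by apply/andP; split; lra.
move=> gamma /andP[ag gb] x x'; have g0 := lt_le_trans a0 ag.
apply: sqr_le_contraction; rewrite ?normr_ge0 //; first by apply/andP; split; lra.
apply: (DR_op_sqr_contraction A1 A2 L mu) => //.
- by apply/andP; split; [exact: ltW | exact: c_le1].
- by rewrite ge_min -!mulrA ler_pM2l // ler_pM2r // ag orbT.
- by rewrite lerD2l ler_wpM2r.
Qed.
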